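(* Let $P$ be a finite poset and $R$ a consistent restriction function on $P$ such that each $R(p)$ is a nonempty interval of integers. Then on the set $\{(p,k):p\in P,\ k\in R(p)^*\}$, the defining relation $\lessdot$ of $\Gamma(P,R)$ holds between $(p_1,k_1)$ and $(p_2,k_2)$ if and only if either (1) $p_1=p_2$ and $k_1=k_2+1$, or (2) $p_1\lessdot p_2$ in $P$ and $k_1+1=k_2$. In particular, $\Gamma(P,R)$ is the poset on this set whose covering relations are exactly those given by (1) and (2).
   Context: A restriction function assigns to each $p\in P$ a nonempty finite $R(p)\subseteq\mathbb{Z}$; $R$ is consistent if for every cover $x\lessdot y$ in $P$, $\min R(x)<\min R(y)$ and $\max R(x)<\max R(y)$. $R(p)^*=R(p)\setminus\{\max R(p)\}$; $R(p)_{>k}$ (resp. $R(p)_{<k}$) is the smallest (resp. largest) element of $R(p)$ greater (resp. less) than $k$. $\Gamma(P,R)$ is the poset on $\{(p,k):p\in P,k\in R(p)^*\}$ whose order is the reflexive–transitive closure of the relation $(p_1,k_1)\lessdot(p_2,k_2)$ (its covering relations), which holds iff either (i) $p_1=p_2$ and $R(p_1)_{>k_2}=k_1$; or (ii) $p_1\lessdot p_2$ in $P$, $k_1=R(p_1)_{<k_2}$, $k_1\ne\max R(p_1)$, and there is no $k\in R(p_2)$ with $k>k_2$ and $R(p_1)_{<k}=k_1$. *)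

From HB Require Import structures.
From mathcomp Require Import all_boot all_order all_algebra.
From mathcomp Require Import finmap.
From Stdlib Require Import Relations.
Set Implicit Arguments. Unset Strict Implicit. Unset Printing Implicit Defensive.
Import Order.TTheory GRing.Theory Num.Theory.
Local Open Scope fset_scope.

Section Gamma.
Context {disp : Order.disp_t} {P : finPOrderType disp}.

Definition pcovers (x y : P) : Prop :=
  (x < y)%O /\ ~ (exists z : P, (x < z)%O /\ (z < y)%O).

Definition is_min (S : {fset int}) (m : int) : Prop :=
  m \in S /\ forall j, j \in S -> (m <= j)%R.
Definition is_max (S : {fset int}) (m : int) : Prop :=
  m \in S /\ forall j, j \in S -> (j <= m)%R.
Definition is_succ (S : {fset int}) (k m : int) : Prop :=
  m \in S /\ (k < m)%R /\ forall j, j \in S -> (k < j)%R -> (m <= j)%R.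
Definition is_pred (S : {fset int}) (k m : int) : Prop :=
  m \in S /\ (m < k)%R /\ forall j, j \in S -> (j < k)%R -> (j <= m)%R.

Definition nonempty_restr (R : P -> {fset int}) : Prop :=
  forall p, exists k, k \in R p.

Definition consistent (R : P -> {fset int}) : Prop :=
  forall x y, pcovers x y ->
    (forall a b, is_min (R x) a -> is_min (R y) b -> (a < b)%R) /\
    (forall a b, is_max (R x) a -> is_max (R y) b -> (a < b)%R).

Definition interval_restr (R : P -> {fset int}) : Prop :=
  forall p, exists a b : int, forall k, k \in R p <-> (a <= k <= b)%R.

(* (p,k) is an element of Γ(P,R): k ∈ R(p)^* = R(p) \ {max R(p)} *)
Definition gamma_vertex (R : P -> {fset int}) (v : P * int) : Prop :=
  v.2 \in R v.1 /\ ~ is_max (R v.1) v.2.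

Definition gamma_rel (R : P -> {fset int}) (v w : P * int) : Prop :=
  let (p1, k1) := v in let (p2, k2) := w in
  (p1 = p2 /\ is_succ (R p1) k2 k1) \/
  (pcovers p1 p2 /\ is_pred (R p1) k2 k1 /\ ~ is_max (R p1) k1 /\
   ~ (exists k, k \in R p2 /\ (k2 < k)%R /\ is_pred (R p1) k k1)).

Definition gamma_le (R : P -> {fset int}) : relation (P * int) :=
  clos_refl_trans (P * int)
    (fun v w => gamma_vertex R v /\ gamma_vertex R w /\ gamma_rel R v w).

Definition gamma_lt (R : P -> {fset int}) (v w : P * int) : Prop :=
  v <> w /\ gamma_le R v w.

Definition gamma_covers (R : P -> {fset int}) (v w : P * int) : Prop :=
  gamma_lt R v w /\
  ~ (exists u, gamma_vertex R u /\ gamma_lt R v u /\ gamma_lt R u w).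

End Gamma.

From HB Require Import structures.
From mathcomp Require Import all_boot all_order all_algebra.
From mathcomp Require Import finmap.
From mathcomp Require Import zify.
From Stdlib Require Import Relations.

Set Implicit Arguments.
Unset Strict Implicit.
Unset Printing Implicit Defensive.
Import Order.TTheory GRing.Theory Num.Theory.

(* On an interval S the neighbours S_{>k} and S_{<k} of an element are k + 1
   and k - 1, which turns the defining relation of Gamma(P,R) into the two
   rules (p, k+1) -> (p, k) and (p, k) -> (q, k+1) for p ⋖ q.  Along a chain of
   such steps the poset coordinate weakly increases, and as long as it stays
   put the integer coordinate strictly decreases.  Hence a chain from (p, _)
   to (q, _) with p ⋖ q gains at most 1 in the integer coordinate, and no
   element of Gamma(P,R) lies strictly between the two ends of a step. *)

Definition int_interval (S : {fset int}) : Prop :=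
  exists a b : int, forall k, k \in S <-> (a <= k <= b)%R.

Section IntervalNeighbours.
Variable S : {fset int}.

Lemma interval_addr1_mem k :
  int_interval S -> k \in S -> ~ is_max S k -> (k + 1)%R \in S.
Proof.
move=> [a [b Sab]] /Sab /andP[ak kb] kNmax; apply/Sab/andP; split; first lia.
have [kb'|] := eqVneq k b; last lia.
by case: kNmax; split=> [|j /Sab]; [apply/Sab/andP; split|]; lia.
Qed.

Lemma is_succ_addr1 k : (k + 1)%R \in S -> is_succ S k (k + 1)%R.
Proof. by move=> k1S; split=> //; split=> [|j _]; lia. Qed.

Lemma is_succ_addr1_eq k m : (k + 1)%R \in S -> is_succ S k m -> m = (k + 1)%R.
Proof. by move=> k1S [_ [km /(_ _ k1S)]]; lia. Qed.

Lemma is_pred_addr1 m : m \in S -> is_pred S (m + 1)%R m.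
Proof. by move=> mS; split=> //; split=> [|j _]; lia. Qed.

Lemma is_pred_addr1_eq k m : (m + 1)%R \in S -> is_pred S k m -> k = (m + 1)%R.
Proof.
move=> m1S [_ [mk mmax]]; have [|] := ltrP (m + 1)%R k; last lia.
by move/(mmax _ m1S); lia.
Qed.

End IntervalNeighbours.

Section Gamma.
Context {disp : Order.disp_t} {P : finPOrderType disp}.

Definition gamma_step (v w : P * int) : Prop :=
  (v.1 = w.1 /\ v.2 = (w.2 + 1)%R) \/ (pcovers v.1 w.1 /\ (v.2 + 1)%R = w.2).

Local Notation gamma_path := (clos_refl_trans _ gamma_step).

Lemma gamma_step_neq v w : gamma_step v w -> v <> w.
Proof. by move=> [[_ e]|[[lt _] _]] vw; subst w; [lia|rewrite ltxx in lt]. Qed.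

Lemma gamma_step_le v w : gamma_step v w -> (v.1 <= w.1)%O.
Proof. by move=> [[-> _]|[[/ltW le _] _]]. Qed.

Lemma gamma_path_le v w : gamma_path v w -> (v.1 <= w.1)%O.
Proof.
elim=> [x y /gamma_step_le //|//|x y z _ xy _ yz].
exact: le_trans xy yz.
Qed.

Lemma gamma_path_fixed v w : gamma_path v w -> v.1 = w.1 -> v = w \/ (w.2 < v.2)%R.
Proof.
move/clos_rt_rt1n_iff; elim=> [{}v|u {}v {}w uv /clos_rt_rt1n_iff vw IH] uw; first by left.
right; case: uv => [[uv1 uv2]|[[uv1 _] _]].
  by case: (IH _) => [|<-|]; [rewrite -uv1|lia|lia].
have := gamma_path_le vw; rewrite -uw => vu.
by have := lt_le_trans uv1 vu; rewrite ltxx.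
Qed.

Lemma gamma_path_gain v w : gamma_path v w ->
  (w.2 <= v.2 + 1)%R \/ exists z, (v.1 < z)%O /\ (z < w.1)%O.
Proof.
move/clos_rt_rt1n_iff; elim=> [{}v|u {}v {}w uv /clos_rt_rt1n_iff vw IH]; first by left; lia.
case: uv => [[uv1 uv2]|[[uv1 _] uv2]].
  by case: IH => [|[z]]; [left; lia|rewrite -uv1; right; exists z].
have [vw1|vw1] := eqVneq v.1 w.1.
  by left; case: (gamma_path_fixed vw vw1) => [<-|]; lia.
by right; exists v.1; split=> //; rewrite lt_neqAle vw1 (gamma_path_le vw).
Qed.

Lemma gamma_step_no_between v u w :
  gamma_step v w -> gamma_path v u -> gamma_path u w -> u = v \/ u = w.
Proof.
move=> vw vu uw; have vu1 := gamma_path_le vu; have uw1 := gamma_path_le uw.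
case: vw => [[vw1 vw2]|[[vw1 noz] vw2]].
  have uv1 : v.1 = u.1 by apply/eqP; rewrite eq_le vu1 vw1 uw1.
  case: (gamma_path_fixed vu uv1) => [|uv2]; first by left.
  case: (gamma_path_fixed uw (etrans (esym uv1) vw1)) => [|wu2]; first by right.
  exfalso; lia.
have [vu1'|vu1'] := eqVneq v.1 u.1.
  case: (gamma_path_fixed vu vu1') => [|uv2]; first by left.
  case: (gamma_path_gain uw) => [?|[z zs]]; first by exfalso; lia.
  by case: noz; exists z; rewrite vu1'.
have [uw1'|uw1'] := eqVneq u.1 w.1.
  case: (gamma_path_fixed uw uw1') => [|wu2]; first by right.
  case: (gamma_path_gain vu) => [?|[z zs]]; first by exfalso; lia.
  by case: noz; exists z; rewrite -uw1'.
by case: noz; exists u.1; rewrite !lt_neqAle vu1' uw1' vu1 uw1.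
Qed.

Section IntervalRestriction.
Variable R : P -> {fset int}.
Hypothesis R_interval : interval_restr R.

Lemma gamma_relE p1 k1 p2 k2 :
  gamma_vertex R (p1, k1) -> gamma_vertex R (p2, k2) ->
  gamma_rel R (p1, k1) (p2, k2) <-> gamma_step (p1, k1) (p2, k2).
Proof.
move=> [/= k1R k1Nmax] [/= k2R k2Nmax].
have k1R' := interval_addr1_mem (R_interval p1) k1R k1Nmax.
have k2R' := interval_addr1_mem (R_interval p2) k2R k2Nmax.
split=> [[[e succ]|[p12 [pred _]]]|[[/= e ->]|[/= p12 <-]]] /=.
- by subst p2; left; split=> //; apply: is_succ_addr1_eq k2R' succ.
- by right; split=> //; apply/esym/(is_pred_addr1_eq k1R' pred).
- by subst p2; left; split=> //; apply: is_succ_addr1.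
- right; split=> //; split; first exact: is_pred_addr1.
  split=> // -[k [_ [ltk /(is_pred_addr1_eq k1R')]]]; lia.
Qed.

Lemma gamma_le_path v w : gamma_le R v w -> gamma_path v w.
Proof.
elim=> [[p1 k1] [p2 k2] [vV [wV /(gamma_relE vV wV)]]|{}v|u {}v {}w _ uv _ vw].
- exact: rt_step.
- exact: rt_refl.
- exact: rt_trans uv vw.
Qed.

Lemma gamma_le_first_step v w : gamma_le R v w -> v <> w ->
  exists2 u, gamma_vertex R u /\ gamma_step v u & gamma_le R u w.
Proof.
move/clos_rt_rt1n_iff => [//|u {}w [vV [uV]]].
case: v u vV uV => [p1 k1] [p2 k2] vV uV /(gamma_relE vV uV) vu /clos_rt_rt1n_iff uw _.
by exists (p2, k2).
Qed.

Lemma gamma_coversE p1 k1 p2 k2 :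
  gamma_vertex R (p1, k1) -> gamma_vertex R (p2, k2) ->
  gamma_covers R (p1, k1) (p2, k2) <-> gamma_step (p1, k1) (p2, k2).
Proof.
move=> vV wV; split.
- move=> [[vw vLw] noBetween].
  have [u [uV vu] uLw] := gamma_le_first_step vLw vw.
  have [e|uw] := eqVneq u (p2, k2); first by subst u.
  case: noBetween; exists u; split=> //; split; split=> //.
  + exact: gamma_step_neq vu.
  + by apply: rt_step; case: u uV vu {uLw uw} => p k uV /(gamma_relE vV uV).
  + exact/eqP.
- move=> vw; split; first split.
  + exact: gamma_step_neq vw.
  + by apply: rt_step; do 2!split=> //; apply/(gamma_relE vV wV).
  move=> [u [_ [[vu /gamma_le_path vLu] [uw /gamma_le_path uLw]]]].
  by case: (gamma_step_no_between vw vLu uLw) => e; [apply: vu|apply: uw].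
Qed.

End IntervalRestriction.

End Gamma.

Theorem theorem2p21 (disp : Order.disp_t) (P : finPOrderType disp)
    (R : P -> {fset int})
    (hne : nonempty_restr R) (hcons : consistent R) (hint : interval_restr R) :
  forall p1 k1 p2 k2,
    gamma_vertex R (p1, k1) -> gamma_vertex R (p2, k2) ->
    (gamma_rel R (p1, k1) (p2, k2) <->
       (p1 = p2 /\ k1 = (k2 + 1)%R) \/ (pcovers p1 p2 /\ (k1 + 1)%R = k2)) /\
    (gamma_covers R (p1, k1) (p2, k2) <->
       (p1 = p2 /\ k1 = (k2 + 1)%R) \/ (pcovers p1 p2 /\ (k1 + 1)%R = k2)).
Proof.
move=> p1 k1 p2 k2 vV wV.
by split; [apply: gamma_relE | apply: gamma_coversE].
Qed.
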